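(* Let $\mathcal F$ be a proper filter on $\omega$. Then $\mathcal F$ is a non-meager P-filter if and only if every $\mathcal F$-tree of finite sets has a branch whose union belongs to $\mathcal F$.
   Context: A filter on $\omega$ is a family $\mathcal F\subseteq\mathcal P(\omega)$ closed under finite intersections and supersets and containing all cofinite sets; it is proper if all its members are infinite. $\mathcal P(\omega)$ is identified with $2^\omega$ via characteristic functions, with the product topology of the discrete space $\{0,1\}$; ''meager'' refers to this topology. $X\subseteq^* Y$ means $X\setminus Y$ is finite. $\mathcal F$ is a P-filter if for every sequence $\langle X_n:n\in\omega\rangle\subseteq\mathcal F$ there is $X\in\mathcal F$ with $X\subseteq^* X_n$ for all $n$. Let $[\omega]^{<\omega}$ denote the set of finite subsets of $\omega$. A tree of finite sets is a set $T$ of finite sequences of elements of $[\omega]^{<\omega}$ containing the empty sequence and closed under initial segments; it is an $\mathcal F$-tree of finite sets if for each $\bar s\in T$ there is $X_{\bar s}\in\mathcal F$ such that $\bar s^\frown a\in T$ for every finite $a\subseteq X_{\bar s}$. A branch is an infinite sequence $\langle s_k:k\in\omega\rangle$ all of whose finite initial segments lie in $T$; its union is $\bigcup_k s_k$. *)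

From HB Require Import structures.
From mathcomp Require Import all_boot all_order finmap.
From mathcomp Require Import all_classical all_reals topology cantor.
Set Implicit Arguments. Unset Strict Implicit. Unset Printing Implicit Defensive.
Local Open Scope classical_set_scope.

Definition is_filter (F : set (set nat)) : Prop :=
  (forall X Y, F X -> F Y -> F (X `&` Y)) /\
  (forall X Y, F X -> X `<=` Y -> F Y) /\
  (forall X, finite_set (~` X) -> F X).

Definition proper_filter (F : set (set nat)) : Prop :=
  is_filter F /\ (forall X, F X -> infinite_set X).

Definition almost_subset (X Y : set nat) : Prop := finite_set (X `\` Y).

Definition P_filter (F : set (set nat)) : Prop :=
  forall Xs : nat -> set nat, (forall n, F (Xs n)) ->
    exists X, F X /\ forall n, almost_subset X (Xs n).

(* P(omega) identified with 2^omega (Cantor space, product of discrete {0,1})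
   via characteristic functions. *)
Definition chi (X : set nat) : cantor_space := fun n => `[< X n >].

Definition nowhere_dense (T : topologicalType) (A : set T) : Prop :=
  interior (closure A) = set0.

Definition meager (T : topologicalType) (A : set T) : Prop :=
  exists N : nat -> set T, (forall n, nowhere_dense (N n)) /\
    A `<=` \bigcup_n N n.

Definition meager_family (F : set (set nat)) : Prop := meager (chi @` F).

Definition tree_of_finsets (T : set (seq {fset nat})) : Prop :=
  T [::] /\ (forall s t, T (s ++ t) -> T s).

Definition F_tree (F : set (set nat)) (T : set (seq {fset nat})) : Prop :=
  tree_of_finsets T /\
  forall s, T s -> exists X, F X /\
    forall a : {fset nat}, (forall x, x \in a -> X x) -> T (rcons s a).

Definition branch (T : set (seq {fset nat})) (b : nat -> {fset nat}) : Prop :=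
  forall n, T (mkseq b n).

Definition branch_union (b : nat -> {fset nat}) : set nat :=
  [set m | exists k, m \in b k].

(* (=>) Given an F-tree, the P-property yields one X in F almost contained in
   the successor set of every node.  Finitely many nodes have length <= j and
   entries below n, so beyond a common threshold X lies in all their successor
   sets.  Choosing consecutive blocks [n_j, n_(j+1)) past these thresholds,
   non-meagerness gives W in F missing infinitely many blocks; cutting X at the
   missed blocks gives a branch whose union contains X /\ W minus a finite set.
   (<=) For the P-property, take the tree whose k-th entries lie in
   X_0 /\ ... /\ X_k.  If F were covered by nowhere dense sets N_j, build a tree
   whose j-th level forces the characteristic point out of N_j; a branch with
   union in F would give a member of F lying outside every N_j. *)

From mathcomp Require Import all_boot finmap.
From mathcomp Require Import all_classical topology cantor.
Local Open Scope classical_set_scope.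

Lemma finite_nat_bounded (A : set nat) : finite_set A <-> exists M, A `<=` `I_M.
Proof.
split => [|[M AM]]; last exact: sub_finite_set (finite_II M).
move=> /finite_fsetP[X ->]; exists (\max_(i <- X) i).+1 => i /= Xi.
by rewrite ltnS (@leq_bigmax_seq _ _ xpredT id).
Qed.

Lemma almost_subset_near {X Y : set nat} :
  almost_subset X Y -> \forall i \near \oo, X i -> Y i.
Proof.
move=> /finite_nat_bounded[M XYM]; exists M => // i /= Mi Xi.
by apply: contrapT => nYi; have := XYM i (conj Xi nYi); rewrite /= ltnNge Mi.
Qed.

Section FilterFacts.
Context {F : set (set nat)} (filterF : is_filter F).

Lemma filter_tail M : F [set i | M <= i].
Proof.
case: filterF => _ [_ Fcof]; apply: Fcof; apply/finite_nat_bounded.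
by exists M => i /=; rewrite leqNgt => /negP/negbNE.
Qed.

Lemma filter_setT : F setT.
Proof. by case: filterF => _ [FS _]; exact: FS (filter_tail 0) _. Qed.

Lemma filter_prefix_meet (Xs : nat -> set nat) :
  (forall n, F (Xs n)) -> forall n, F [set i | forall m, m <= n -> Xs m i].
Proof.
case: filterF => FI [FS _] FXs; elim=> [|n IH].
  by apply: FS (FXs 0) _ => i Xi m; rewrite leqn0 => /eqP->.
apply: FS (FI _ _ IH (FXs n.+1)) _ => i [Xi Xni] m.
by rewrite leq_eqVlt => /predU1P[->//|]; exact: Xi.
Qed.

End FilterFacts.

Section Increasing.
Context {f : nat -> nat} (f_incr : forall j, f j < f j.+1).

Lemma incr_mono : {mono f : m n / m <= n}.
Proof. exact/leq_mono/(homo_ltn (fun y x z => @ltn_trans y x z) f_incr). Qed.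

Lemma incr_infl n : n <= f n.
Proof. by elim: n => // n IH; exact: leq_ltn_trans IH (f_incr n). Qed.

Lemma incr_interval i : f 0 <= i -> exists k, f k <= i < f k.+1.
Proof.
move=> f0i; have [N iN] : exists N, i < f N by exists i.+1; exact: incr_infl.
elim: N iN => [|N IH] iN; first by move: iN; rewrite ltnNge f0i.
by case: (ltnP i (f N)) => [/IH//|fNi]; exists N; rewrite fNi.
Qed.

End Increasing.

Lemma branch_property_P_filter F : is_filter F ->
  (forall T, F_tree F T -> exists b, branch T b /\ F (branch_union b)) ->
  P_filter F.
Proof.
move=> filterF branchF Xs FXs.
pose meet n := [set i | forall m, m <= n -> Xs m i].
pose T := [set s : seq {fset nat} |
  forall k, k < size s -> forall i, i \in nth fset0 s k -> meet k i].
have treeT : F_tree F T.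
  split; first split => [k //|s t st k ks].
    by move: (st k); rewrite size_cat nth_cat ks (ltn_addr _ ks); apply.
  move=> s Ts; exists (meet (size s)); split; first exact: filter_prefix_meet.
  move=> a a_meet k; rewrite size_rcons ltnS leq_eqVlt nth_rcons.
  by case/predU1P => [->|ks]; rewrite ?ltnn ?eqxx ?ks //; exact: Ts.
have [b [Tb Fb]] := branchF T treeT.
have b_meet k i : i \in b k -> meet k i.
  by move=> bki; apply: (Tb k.+1); rewrite ?size_mkseq ?nth_mkseq.
exists (branch_union b); split => // n.
apply: sub_finite_set
  (bigcup_finite (finite_II n) (fun k _ => finite_fset (b k))).
move=> i [[k bki] nXi]; exists k => //=.
by rewrite ltnNge; apply/negP => nk; apply: nXi; exact: b_meet bki n nk.
Qed.

Definition cylinder (x : cantor_space) (L : nat) : set cantor_space :=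
  [set z | forall i, i < L -> z i = x i].

Lemma cylinder_le {x L L'} : L <= L' -> cylinder x L' `<=` cylinder x L.
Proof. by move=> LL' z xz i iL; apply: xz; exact: leq_trans iL LL'. Qed.

Lemma nbhs_cylinder x L : nbhs x (cylinder x L).
Proof.
elim: L => [|L IH]; first by apply: (filterS _ (@filterT _ (nbhs x) _)) => z.
have nbhs_coord : nbhs x (proj L @^-1` [set x L] : set cantor_space).
  apply: open_nbhs_nbhs; split => //.
  apply: open_comp; last exact: discrete_open.
  by move=> + _; exact: proj_continuous.
apply: filterS (filterI IH nbhs_coord) => z [xz zL] i.
by rewrite ltnS leq_eqVlt => /predU1P[->|]; [exact: zL | exact: xz].
Qed.

Lemma nbhs_sub_cylinder (x : cantor_space) (A : set cantor_space) :
  nbhs x A -> exists L, cylinder x L `<=` A.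
Proof.
pose G := filter_from [set: nat] (cylinder x).
have filterG : Filter G.
  apply: filter_from_filter; first by exists 0.
  move=> i j _ _; exists (maxn i j) => // z xz.
  by split; apply: cylinder_le xz; rewrite ?leq_maxl ?leq_maxr.
have : G --> (x : cantor_space).
  apply/cvg_sup => N U [V] [[W] oW <-] WfN WU.
  by exists N.+1 => // z xz; apply: WU => /=; rewrite (xz N).
by move=> /(_ A) GA /GA[L _ xLA]; exists L.
Qed.

Lemma nowhere_dense_avoid {N : set cantor_space} : nowhere_dense N ->
  forall x L, exists L' y, [/\ L < L', cylinder x L y & cylinder y L' `<=` ~` N].
Proof.
move=> ndN x L.
have [y [xy ncly]] : exists y, cylinder x L y /\ ~ closure N y.
  apply/not_existsP => cyl_clN.
  suff : interior (closure N) x by rewrite ndN.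
  apply: filterS (nbhs_cylinder x L) => y xy.
  by have /not_andP[//|/contrapT] := cyl_clN y.
have [B [yB NB]] : exists B, nbhs y B /\ ~ (N `&` B !=set0).
  apply/not_existsP => clN; apply: ncly => B yB.
  by have /not_andP[//|/contrapT] := clN B.
have [L1 yL1B] := nbhs_sub_cylinder y B yB.
exists (maxn L.+1 L1), y; split => //; first exact: leq_maxl.
move=> z /(cylinder_le (leq_maxr L.+1 L1)) /yL1B Bz Nz.
exact: NB (ex_intro _ z (conj Nz Bz)).
Qed.

Definition meets_blocks_from (nn : nat -> nat) (j0 : nat) : set cantor_space :=
  [set z | forall j, j0 <= j -> exists2 i, nn j <= i < nn j.+1 & z i].

Lemma meets_blocks_nowhere_dense nn j0 : (forall j, nn j < nn j.+1) ->
  nowhere_dense (meets_blocks_from nn j0).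
Proof.
move=> nn_incr; apply/seteqP; split => // x /nbhs_sub_cylinder[L xL_cl].
pose y : cantor_space := fun i => (i < L) && x i.
pose j := maxn j0 L.
have [z [meets_z yz]] : meets_blocks_from nn j0 `&` cylinder y (nn j.+1) !=set0.
  by apply: (xL_cl y) (nbhs_cylinder y _) => i iL; rewrite /y iL.
have [i /andP[ji ij] zi] := meets_z j (leq_maxl _ _).
have Li : L <= i.
  by rewrite (leq_trans (leq_maxr j0 L)) // (leq_trans (incr_infl nn_incr j)).
by move: zi; rewrite yz // /y ltnNge Li.
Qed.

Lemma nonmeager_misses_blocks {F nn} : (forall j, nn j < nn j.+1) ->
  ~ meager_family F ->
  exists2 W, F W & forall j0, exists j,
    j0 <= j /\ forall i, nn j <= i < nn j.+1 -> ~ W i.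
Proof.
move=> nn_incr nmF; apply: contrapT => noW; apply: nmF.
exists (meets_blocks_from nn); split => [j0|_ [W FW <-]].
  exact: meets_blocks_nowhere_dense.
have /existsNP[j0 meetsW] : ~ forall j0, exists j, j0 <= j /\
    forall i, nn j <= i < nn j.+1 -> ~ W i.
  by move=> missW; apply: noW; exists W.
exists j0 => // j j0j; apply: contrapT => nmeet.
apply: meetsW; exists j; split => // i ij Wi; apply: nmeet.
by exists i => //; rewrite /chi asboolT.
Qed.

Lemma coherent_limit {x : nat -> cantor_space} {g : nat -> nat} :
  (forall k, g k < g k.+1) -> (forall k, cylinder (x k) (g k) (x k.+1)) ->
  forall k, cylinder (x k) (g k) (fun i => x i.+1 i).
Proof.
move=> g_incr x_coh.
have x_stable k m : k <= m -> cylinder (x k) (g k) (x m).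
  move=> /subnK <-; elim: (m - k) => [//|n IH] i ik.
  by rewrite addSn x_coh ?IH // (leq_trans ik) // incr_mono // leq_addl.
move=> k i ik /=; case: (leqP k i.+1) => [ki|ik1]; first exact: x_stable.
by rewrite (x_stable _ _ (ltnW ik1)) // (incr_infl g_incr).
Qed.

Section AvoidingTree.
Variable N : nat -> set cantor_space.
Variable avoid : nat -> cantor_space -> nat -> nat * cantor_space.
Hypothesis avoid_gt : forall j x L, L < (avoid j x L).1.
Hypothesis avoid_cylinder : forall j x L, cylinder x L (avoid j x L).2.
Hypothesis avoid_N :
  forall j x L, cylinder (avoid j x L).2 (avoid j x L).1 `<=` ~` N j.

(* Past a node, the first [committed] values of [point] are final.  The next
   entry must lie beyond [frontier], below which [guide] keeps every
   extension out of [N depth]. *)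
Record stage := Stage { depth : nat; committed : nat; point : cantor_space }.

Definition frontier st := (avoid (depth st) (point st) (committed st)).1.
Definition guide st := (avoid (depth st) (point st) (committed st)).2.

Definition next_stage st (a : {fset nat}) :=
  Stage (depth st).+1 (maxn (frontier st) (\max_(i <- a) i).+1)
    (fun i => if i < frontier st then guide st i else i \in a).

Definition stage_of (s : seq {fset nat}) :=
  foldl next_stage (Stage 0 0 (fun=> false)) s.

Definition avoiding_tree : set (seq {fset nat}) := [set s |
  forall k, k < size s ->
  forall i, i \in nth fset0 s k -> frontier (stage_of (take k s)) <= i].

Lemma stage_of_rcons s a : stage_of (rcons s a) = next_stage (stage_of s) a.
Proof. exact: foldl_rcons. Qed.

Lemma depth_stage_of s : depth (stage_of s) = size s.
Proof.
by elim/last_ind: s => // s a IH; rewrite stage_of_rcons size_rcons /= IH.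
Qed.

Lemma next_stage_guide st a :
  cylinder (guide st) (frontier st) (point (next_stage st a)).
Proof. by move=> i /= ->. Qed.

Lemma next_stage_coherent st a :
  cylinder (point st) (committed st) (point (next_stage st a)).
Proof.
move=> i ist; have ifr : i < frontier st := ltn_trans ist (avoid_gt _ _ _).
by rewrite next_stage_guide //; exact: avoid_cylinder ist.
Qed.

Lemma avoiding_tree_F_tree F : is_filter F -> F_tree F avoiding_tree.
Proof.
move=> filterF; split; first split => [k //|s t st k ks].
  by move: (st k); rewrite size_cat nth_cat take_cat ks (ltn_addr _ ks); apply.
move=> s Ts; exists [set i | frontier (stage_of s) <= i]; split.
  exact: filter_tail.
move=> a a_fr k; rewrite size_rcons ltnS leq_eqVlt nth_rcons -cats1 take_cat.
case/predU1P => [->|ks]; rewrite ?ltnn ?subnn ?take0 ?cats0 ?eqxx ?ks //.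
exact: Ts.
Qed.

Lemma avoiding_branch_point b : branch avoiding_tree b ->
  exists z : cantor_space, branch_union b `<=` [set i | z i] /\ forall j, ~ N j z.
Proof.
move=> Tb; pose st k := stage_of (mkseq b k).
have stS k : st k.+1 = next_stage (st k) (b k).
  by rewrite /st mkseqS stage_of_rcons.
have g_incr k : committed (st k) < committed (st k.+1).
  by rewrite stS; exact: leq_trans (avoid_gt _ _ _) (leq_maxl _ _).
have x_coh k : cylinder (point (st k)) (committed (st k)) (point (st k.+1)).
  by rewrite stS; exact: next_stage_coherent.
have z_lim := coherent_limit g_incr x_coh.
exists (fun i => point (st i.+1) i); split => [i [k /= bki]|j Nj].
  have frki : frontier (st k) <= i.
    by move: (Tb k.+1 k); rewrite size_mkseq nth_mkseq // mkseqS -cats1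
      take_size_cat ?size_mkseq //; apply.
  rewrite (z_lim k.+1); last by rewrite stS /= (leq_trans _ (leq_maxr _ _))
    // ltnS (@leq_bigmax_seq _ _ xpredT id).
  by rewrite stS /= ltnNge frki.
move: Nj; rewrite -[j in N j](size_mkseq b j) -depth_stage_of.
apply: avoid_N => i ifr.
rewrite (z_lim j.+1); first by rewrite stS next_stage_guide.
by rewrite stS (leq_trans ifr) ?leq_maxl.
Qed.

End AvoidingTree.

Lemma meager_family_tree_without_branch {F} : is_filter F -> meager_family F ->
  exists2 T, F_tree F T & forall b, branch T b -> ~ F (branch_union b).
Proof.
move=> filterF [N [ndN coverN]].
have /choice[avoid avoidP] : forall p : nat * cantor_space * nat,
    exists q : nat * cantor_space,
    [/\ p.2 < q.1, cylinder p.1.2 p.2 q.2 & cylinder q.2 q.1 `<=` ~` N p.1.1].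
  move=> [[j x] L]; have [L' [y avoidy]] := nowhere_dense_avoid (ndN j) x L.
  by exists (L', y).
pose av j x L := avoid (j, x, L).
have av_gt j x L : L < (av j x L).1 by case: (avoidP (j, x, L)).
have av_cyl j x L : cylinder x L (av j x L).2 by case: (avoidP (j, x, L)).
have av_N j x L : cylinder (av j x L).2 (av j x L).1 `<=` ~` N j.
  by case: (avoidP (j, x, L)).
exists (avoiding_tree av); first exact: avoiding_tree_F_tree.
move=> b /(avoiding_branch_point _ _ av_gt av_cyl av_N)[z [bz zN]] Fb.
have chiz : chi [set i | z i] = z by apply/funext => i; rewrite /chi asboolb.
have [j _ Njz] : (\bigcup_n N n) z.
  apply: coverN; exists [set i | z i] => //.
  by case: filterF => _ [FS _]; exact: FS Fb bz.
exact: zN Njz.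
Qed.

Lemma P_filter_countable {F} {I : countType} {Xs : I -> set nat} :
  is_filter F -> P_filter F -> (forall i, F (Xs i)) ->
  exists2 X, F X & forall i, almost_subset X (Xs i).
Proof.
move=> filterF PF FXs.
pose Ys n := if choice.unpickle n is Some i then Xs i else setT.
have [|X [FX XXs]] := PF Ys.
  by move=> n; rewrite /Ys; case: choice.unpickle => [i|];
    [exact: FXs | exact: filter_setT filterF].
by exists X => // i; have := XXs (choice.pickle i); rewrite /Ys choice.pickleK.
Qed.

Lemma near_forall_fsubset (P : {fset nat} -> nat -> Prop) (A : {fset nat}) :
  (forall a, \forall i \near \oo, P a i) ->
  \forall i \near \oo, forall a, (a `<=` A)%fset -> P a i.
Proof.
move=> nearP.
apply: filterS (@filter_bigI _ _ (fpowerset A) P \oo _ (fun a _ => nearP a)).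
by move=> i Pi a aA; apply: Pi; rewrite /= fpowersetE.
Qed.

Lemma near_forall_short_seq (P : seq {fset nat} -> nat -> Prop)
    (A : {fset nat}) j :
  (forall s, \forall i \near \oo, P s i) ->
  \forall i \near \oo,
    forall s, size s <= j -> all (fun a => a `<=` A)%fset s -> P s i.
Proof.
elim: j P => [|j IH] P nearP; first by apply: filterS (nearP [::]) => i P0 [].
have nearP' := IH (fun s i => forall a, (a `<=` A)%fset -> P (a :: s) i)
  (fun s => near_forall_fsubset _ A (fun a => nearP (a :: s))).
apply: filterS2 (nearP [::]) nearP' => i P0 Pcons [//|a s] /= sj /andP[aA sA].
exact: Pcons.
Qed.

Section BranchConstruction.
Variables (F : set (set nat)) (T : set (seq {fset nat})).
Variable succ : seq {fset nat} -> set nat.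
Hypothesis filterF : is_filter F.
Hypothesis T_nil : T [::].
Hypothesis T_rcons :
  forall s a, T s -> (forall x, x \in a -> succ s x) -> T (rcons s a).
Variables (X : set nat) (bound : nat -> nat -> nat).
Hypothesis FX : F X.
Hypothesis boundP : forall n j i, bound n j <= i -> X i ->
  forall s, size s <= j ->
  all (fun a => a `<=` [fset x in iota 0 n])%fset s -> succ s i.

(* [blocks j.+1] lies past the threshold of the nodes of length <= j with
   entries below [blocks j]: a node built from pieces ending before block j
   accepts every element of X from block j.+1 on. *)
Fixpoint blocks j :=
  if j is j'.+1 then maxn (blocks j').+1 (bound (blocks j') j') else 0.

Lemma blocks_incr j : blocks j < blocks j.+1.
Proof. exact: leq_maxl. Qed.

Variables (W : set nat) (skip : nat -> nat).
Hypothesis FW : F W.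
Hypothesis skip_ge : forall j, j <= skip j.
Hypothesis skip_missed :
  forall j i, blocks (skip j) <= i < blocks (skip j).+1 -> ~ W i.

(* [gap k] indexes the k-th block missed by W; [piece k] is X between the
   k-th and the (k+1)-th missed block. *)
Definition gap k := iter k (fun j => skip j.+1) (skip 0).
Definition piece_lo k := blocks (gap k).+1.
Definition piece_hi k := blocks (gap k.+1).
Definition piece k : {fset nat} :=
  [fset i in iota (piece_lo k) (piece_hi k - piece_lo k) | `[< X i >]]%fset.

Lemma gap_incr k : gap k < gap k.+1.
Proof. exact: skip_ge. Qed.

Lemma piece_lo_le_hi k : piece_lo k <= piece_hi k.
Proof.
by rewrite /piece_lo /piece_hi (incr_mono blocks_incr); exact: gap_incr.
Qed.

Lemma in_piece k i :
  (i \in piece k) = [&& piece_lo k <= i, i < piece_hi k & `[< X i >]].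
Proof. by rewrite !inE mem_iota subnKC ?piece_lo_le_hi // andbA. Qed.

Lemma piece_branch : branch T piece.
Proof.
elim=> [//|k IH]; rewrite mkseqS; apply: T_rcons IH _ => i.
rewrite in_piece => /and3P[loi _ /asboolP Xi].
apply: boundP Xi _ _ _.
- exact: leq_trans (leq_maxr _ _) loi.
- by rewrite size_mkseq; exact: incr_infl gap_incr k.
apply/allP => _ /mapP[k' + ->]; rewrite mem_iota => /andP[_ k'k].
apply/fsubsetP => x; rewrite in_piece !inE mem_iota => /and3P[_ xhi _] /=.
by rewrite (leq_trans xhi) // (incr_mono blocks_incr) (incr_mono gap_incr).
Qed.

Lemma piece_union : F (branch_union piece).
Proof.
have [FI [FS _]] := filterF.
apply: FS (FI _ _ (FI _ _ FX FW) (filter_tail filterF (piece_lo 0))) _.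
move=> i [[Xi Wi] lo0i].
have lo_incr k : piece_lo k < piece_lo k.+1.
  by rewrite /piece_lo (leqW_mono (incr_mono blocks_incr)) ltnS; exact: gap_incr.
have [k /andP[loi ilo]] := incr_interval lo_incr _ lo0i.
exists k; rewrite /= in_piece loi asboolT // andbT ltnNge; apply/negP => hii.
exact: skip_missed ((gap k).+1) i (introT andP (conj hii ilo)) Wi.
Qed.

End BranchConstruction.

Lemma nonmeager_P_filter_branch F :
  is_filter F -> ~ meager_family F -> P_filter F ->
  forall T, F_tree F T -> exists b, branch T b /\ F (branch_union b).
Proof.
move=> filterF nmF PF T [[T_nil _] T_succ].
have /choice[succ succP] : forall s, exists X, F X /\
    (T s -> forall a, (forall x, x \in a -> X x) -> T (rcons s a)).
  move=> s; case: (pselect (T s)) => [/T_succ[X [FX XT]]|nTs]; first by exists X.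
  by exists setT; split => [|/nTs//]; exact: filter_setT filterF.
have [X FX Xsucc] := P_filter_countable filterF PF (fun s => (succP s).1).
have /choice[bound boundP] : forall p : nat * nat, exists M, forall i, M <= i ->
    X i -> forall s, size s <= p.2 ->
    all (fun a => a `<=` [fset x in iota 0 p.1])%fset s -> succ s i.
  move=> [n j].
  have [M _ MP] := near_forall_short_seq _ [fset x in iota 0 n]%fset j
    (fun s => almost_subset_near (Xsucc s)).
  by exists M => i Mi Xi s sj sn; exact: MP.
pose bd n j := bound (n, j).
have [W FW /choice[skip skipP]] := nonmeager_misses_blocks (blocks_incr bd) nmF.
have skip_ge j : j <= skip j by case: (skipP j).
exists (piece X bd skip); split.
  exact: piece_branch T_nil (fun s a Ts => (succP s).2 Ts a) X bd
    (fun n j => boundP (n, j)) skip skip_ge.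
exact: piece_union _ filterF _ _ FX _ _ FW skip_ge (fun j => (skipP j).2).
Qed.

Theorem lemma1p3 (F : set (set nat)) :
  proper_filter F ->
  ((~ meager_family F /\ P_filter F) <->
   (forall T : set (seq {fset nat}), F_tree F T ->
      exists b : nat -> {fset nat}, branch T b /\ F (branch_union b))).
Proof.
move=> [filterF _]; split => [[nmF PF]|branchF].
  exact: nonmeager_P_filter_branch.
split; last exact: branch_property_P_filter.
move=> /(meager_family_tree_without_branch filterF)[T /branchF[b [Tb Fb]] noF].
exact: noF Tb Fb.
Qed.
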